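(* Let $\tau=\overline{\mathrm{K\ddot ah}(X)}\subset L_{\mathrm{ext}}^\vee\otimes\mathbb{R}$ and $\beta=(0,\dots,0,-1/2,\dots,-1/2)$. Let $\mathcal{I}'\subset\mathbb{C}[\alpha_{i,j}:(i,j)\in J]$ be the ideal generated by (a') $I_{\ell_{\mathrm{ext}}(\mathcal{P})}(\alpha)$ for all primitive collections $\mathcal{P}$ of $\Sigma$, and (b') $\sum_{(i,j)\in J}\langle\bar m,\nu_{i,j}\rangle\alpha_{i,j}-\langle\bar m,\beta\rangle$ for all $\bar m\in M\times\mathbb{Z}^r$. Then $\mathcal{I}'\subset\mathrm{Ind}(\tau,\beta)$, and $\mathcal{I}'$ and $\mathrm{Ind}(\tau,\beta)$ have the same zero locus in $\mathbb{C}^J$.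
   Context: $N\cong\mathbb{Z}^n$, $M$ dual. $X$ smooth projective toric with fan $\Sigma$ and nef-partition $\Sigma(1)=I_1\sqcup\cdots\sqcup I_r$ (each $E_i=\sum_{\rho\in I_i}D_\rho$ nef), $I_i=\{\rho_{i,1},\dots,\rho_{i,n_i}\}$, $J=\{(i,j):1\le i\le r,0\le j\le n_i\}$, $\nu_{i,j}=(\rho_{i,j},e_i)$ ($j\ge1$), $\nu_{i,0}=(0,e_i)$ in $N\times\mathbb{Z}^r$. $A_{\mathrm{ext}}:\mathbb{Z}^J\to N\times\mathbb{Z}^r$, $e_{i,j}\mapsto\nu_{i,j}$, $L_{\mathrm{ext}}=\ker A_{\mathrm{ext}}$, isomorphic via forgetting $(i,0)$-coordinates to $L=\ker(e_{i,j}\mapsto\rho_{i,j})\cong H_2(X,\mathbb{Z})$, so $H^2(X,\mathbb{R})\cong L_{\mathrm{ext}}^\vee\otimes\mathbb{R}$; $\overline{\mathrm{K\ddot ah}(X)}$ is the closed Kähler (= nef) cone in it. For $\ell\in L_{\mathrm{ext}}$ with $\ell=\ell^+-\ell^-$ ($\ell^\pm\ge0$, disjoint supports), $I_\ell(\alpha):=x^{-\alpha}x^{\ell^+}\partial_x^{\ell^+}x^\alpha=\prod_{(i,j)\in J}\prod_{k=0}^{\ell^+_{i,j}-1}(\alpha_{i,j}-k)\in\mathbb{C}[\alpha]$. For a cone $\tau\subset L_{\mathrm{ext}}^\vee\otimes\mathbb{R}$ and $\beta\in\mathbb{C}^{n+r}$, the indicial ideal $\mathrm{Ind}(\tau,\beta)\subset\mathbb{C}[\alpha_{i,j}:(i,j)\in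 J]$ is generated by $I_\ell(\alpha)$ for $0\ne\ell\in\tau^\vee\cap L_{\mathrm{ext}}$ and by $\sum_{(i,j)\in J}\langle\bar m,\nu_{i,j}\rangle\alpha_{i,j}-\langle\bar m,\beta\rangle$ for $\bar m\in M\times\mathbb{Z}^r$. A primitive collection is $\mathcal{P}\subset\Sigma(1)$ not spanning a cone while every proper subset does; $\ell_{\mathrm{ext}}(\mathcal{P})\in L_{\mathrm{ext}}$ is the image of its primitive relation $\ell(\mathcal{P})\in L$ (coefficients of $\sum_{\mathcal{P}}\rho_{i,j}-\sum_{\sigma(1)}c_{i,j}\rho_{i,j}=0$, where $\sigma$ is the cone containing $\sum_\mathcal{P}\rho_{i,j}$ in its relative interior and $c_{i,j}\in\mathbb{Z}_{>0}$). *)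

From HB Require Import structures.
From mathcomp Require Import all_boot all_order all_algebra.
From mathcomp Require Import Rstruct.
From mathcomp Require Import complex.
From mathcomp Require Import mpoly.
From Stdlib Require Import Rdefinitions.

Set Implicit Arguments.
Unset Strict Implicit.
Unset Printing Implicit Defensive.

Import Order.TTheory GRing.Theory Num.Theory.
Local Open Scope ring_scope.

Definition RR : rcfType := Rdefinitions.R.
Definition CC : fieldType := complex RR.

(** N = Z^n, an element of N (or M) is a function 'I_n -> int.
    The rays of the fan are indexed by 'I_m, ray k has primitive generator
    [rho k : 'I_n -> int].  A fan is given by the set of its cones, each cone
    being described by the set of indices of the rays generating it. *)

Section Toric.
Variables (n m r : nat).
Variable rho : 'I_m -> 'I_n -> int.
Variable Sigma : {set {set 'I_m}}.

Definition rcone (S : {set 'I_m}) (v : 'I_n -> RR) : Prop :=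
  exists c : 'I_m -> RR,
    (forall k, 0 <= c k) /\ (forall k, k \notin S -> c k = 0) /\
    (forall t, v t = \sum_(k < m) c k * (rho k t)%:~R).

(** [S] is a smooth cone: its ray generators are part of a Z-basis of N *)
Definition smooth_cone (S : {set 'I_m}) : Prop :=
  exists B : 'M[int]_n, B \in unitmx /\
    forall k, k \in S -> exists j : 'I_n, forall t, rho k t = B j t.

Definition maximal_cone (S : {set 'I_m}) : bool :=
  (S \in Sigma) && [forall T : {set 'I_m}, (T \in Sigma) ==> (S \subset T) ==> (T == S)].

(** Sigma is a complete smooth fan in N_R whose set of rays Sigma(1) is
    exactly {rho k | k < m}. *)
Definition smooth_complete_fan : Prop :=
  [/\ injective rho /\ (forall k, [set k] \in Sigma),
      (forall S T : {set 'I_m}, S \in Sigma -> T \subset S -> T \in Sigma),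
      (forall S, S \in Sigma -> smooth_cone S),
      (forall S T : {set 'I_m}, S \in Sigma -> T \in Sigma ->
         forall v, (rcone S v /\ rcone T v) <-> rcone (S :&: T) v) &
      (forall v : 'I_n -> RR, exists2 S, S \in Sigma & rcone S v)].

(** An R-divisor sum_k a_k D_k, a : 'I_m -> RR, is nef iff its support
    function is convex: on each maximal cone sigma there is m_sigma in M_R
    with <m_sigma, rho_k> = - a_k for k in sigma and >= - a_k for all k. *)
Definition nef_divisor (a : 'I_m -> RR) : Prop :=
  forall S, maximal_cone S ->
    exists u : 'I_n -> RR,
      (forall k, k \in S -> \sum_(t < n) u t * (rho k t)%:~R = - a k) /\
      (forall k, - a k <= \sum_(t < n) u t * (rho k t)%:~R).

(** ample: strictly convex support function *)
Definition ample_divisor (a : 'I_m -> RR) : Prop :=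
  forall S, maximal_cone S ->
    exists u : 'I_n -> RR,
      (forall k, k \in S -> \sum_(t < n) u t * (rho k t)%:~R = - a k) /\
      (forall k, k \notin S -> - a k < \sum_(t < n) u t * (rho k t)%:~R).

Definition smooth_projective_fan : Prop :=
  smooth_complete_fan /\ exists a, ample_divisor a.

(** nef-partition: Sigma(1) = I_1 |_| ... |_| I_r, ray k lies in I_(part k),
    and each E_i = sum_{k in I_i} D_k is nef. *)
Definition nef_partition (part : 'I_m -> 'I_r) : Prop :=
  forall i : 'I_r, nef_divisor (fun k => if part k == i then 1 else 0).

(** * The index set J = {(i,j)} is encoded as 'I_(m + r):
    [lshift r k] is the coordinate (i,j), j >= 1, of ray k (i = part k),
    [rshift m i] is the coordinate (i,0). *)
Variable part : 'I_m -> 'I_r.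

Definition nu (j : 'I_(m + r)) : ('I_n -> int) * ('I_r -> int) :=
  match split j with
  | inl k => (rho k, fun i => (part k == i)%:R)
  | inr i => (fun _ => 0, fun i' => (i == i')%:R)
  end.

Definition in_Lext (l : 'I_(m + r) -> int) : Prop :=
  (forall t, \sum_(j < m + r) l j * (nu j).1 t = 0) /\
  (forall i, \sum_(j < m + r) l j * (nu j).2 i = 0).

(** tau^vee for tau the closed Kaehler (= nef) cone in
    H^2(X,R) = L_ext^vee (x) R: the class of the R-divisor sum_k a_k D_k pairs
    with l in L_ext (identified with L by forgetting the (i,0)-coordinates)
    as sum_k a_k l_k. *)
Definition in_dual_Kahler (l : 'I_(m + r) -> int) : Prop :=
  forall a : 'I_m -> RR, nef_divisor a ->
    0 <= \sum_(k < m) a k * (l (lshift r k))%:~R.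

Definition primitive_collection (P : {set 'I_m}) : Prop :=
  P \notin Sigma /\ forall Q : {set 'I_m}, Q \proper P -> Q \in Sigma.

(** l is the primitive relation l(P) in L of P: sum_P rho_k = sum_{sigma} c_k rho_k
    with sigma in Sigma, c_k positive integers (so that sum_P rho_k lies in the
    relative interior of sigma), and l = coefficients of
    sum_P rho_k - sum_sigma c_k rho_k. *)
Definition primitive_relation (P : {set 'I_m}) (l : 'I_m -> int) : Prop :=
  exists sigma : {set 'I_m}, exists c : 'I_m -> int,
    [/\ sigma \in Sigma,
        (forall k, k \in sigma -> 0 < c k),
        (forall t, \sum_(k in P) rho k t = \sum_(k in sigma) c k * rho k t) &
        (forall k, l k = (k \in P)%:R - (if k \in sigma then c k else 0))].

(** the image of l in L under the isomorphism L ~ L_ext *)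
Definition ext_of (l : 'I_m -> int) (j : 'I_(m + r)) : int :=
  match split j with
  | inl k => l k
  | inr i => - \sum_(k < m | part k == i) l k
  end.

End Toric.

Section Poly.
Variable N : nat.

Definition Ipoly (l : 'I_N -> int) : {mpoly CC[N]} :=
  \prod_(j < N) \prod_(t < absz (Num.max (l j) 0)) ('X_j - (t%:R)%:MP).

Definition in_ideal (G : {mpoly CC[N]} -> Prop) (p : {mpoly CC[N]}) : Prop :=
  exists s : seq ({mpoly CC[N]} * {mpoly CC[N]}),
    (forall q, q \in s -> G q.2) /\ p = \sum_(q <- s) q.1 * q.2.

Definition zero_locus (G : {mpoly CC[N]} -> Prop) (x : 'I_N -> CC) : Prop :=
  forall p, in_ideal G p -> p.@[x] = 0.

End Poly.

Section Ideals.
Variables (n m r : nat).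
Variable rho : 'I_m -> 'I_n -> int.
Variable Sigma : {set {set 'I_m}}.
Variable part : 'I_m -> 'I_r.

(** generator (b)/(b') attached to mbar = (mu, mu') in M x Z^r, with
    beta = (0,...,0,-1/2,...,-1/2) in C^(n+r):
    sum_j <mbar, nu_j> alpha_j - <mbar, beta>. *)
Definition lin_gen (mu : 'I_n -> int) (mu' : 'I_r -> int) : {mpoly CC[m + r]} :=
  \sum_(j < m + r)
     ((\sum_(t < n) mu t * (nu rho part j).1 t
       + \sum_(i < r) mu' i * (nu rho part j).2 i)%:~R)%:MP * 'X_j
  - ((- (1 / 2)) * (\sum_(i < r) mu' i)%:~R : CC)%:MP.

Definition Ind_gens (p : {mpoly CC[m + r]}) : Prop :=
  (exists l : 'I_(m + r) -> int,
     [/\ l <> (fun _ => 0), in_Lext rho part l, in_dual_Kahler rho Sigma l &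
         p = Ipoly l])
  \/ (exists mu mu', p = lin_gen mu mu').

Definition Iprime_gens (p : {mpoly CC[m + r]}) : Prop :=
  (exists P l, [/\ primitive_collection Sigma P, primitive_relation rho Sigma P l &
                  p = Ipoly (ext_of part l)])
  \/ (exists mu mu', p = lin_gen mu mu').

End Ideals.

(** - Inclusion: the primitive relation l(P) of a primitive collection lifts
      to a nonzero element l_ext(P) of L_ext which pairs nonnegatively with
      every nef divisor (it is a class in the Mori cone), so every generator
      of I' is a generator of Ind(tau, beta).
    - Zero loci: let x be a zero of I' and Z the set of rays k with
      x_{(i,j)} = 0.  Evaluating I_{l_ext(P)} at x shows that every primitive
      collection meets Z (the (i,0)-coordinates of l_ext(P) are <= 0 by
      nefness of the E_i, and its positive ray coordinates are 1's on P),
      so the complement of Z is a cone T of the fan.  Ampleness and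
      smoothness show that every nonzero l in L_ext /\ tau^vee has a positive
      coordinate l_k at a ray k outside T, i.e. in Z, whence I_l(x) = 0. *)

From HB Require Import structures.
From mathcomp Require Import all_boot all_order all_algebra.
From mathcomp Require Import Rstruct complex mpoly.
From mathcomp Require Import zify.
From Stdlib Require Import FunctionalExtensionality.
Import Order.TTheory GRing.Theory Num.Theory.
Local Open Scope ring_scope.
Set Implicit Arguments. Unset Strict Implicit.

Section Ideals.
Variable N : nat.
Implicit Types (G H : {mpoly CC[N]} -> Prop) (l : 'I_N -> int) (x : 'I_N -> CC).

Lemma in_ideal_gen G g : G g -> in_ideal G g.
Proof.
move=> Gg; exists [:: (1, g)]; split; first by move=> q; rewrite inE => /eqP ->.
by rewrite big_seq1 mul1r.
Qed.

Lemma in_ideal_mono G H p : (forall g, G g -> H g) -> in_ideal G p -> in_ideal H p.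
Proof. by move=> GH [s [hs ->]]; exists s; split => // q /hs /GH. Qed.

Lemma zero_locus_gens G x : (forall g, G g -> g.@[x] = 0) -> zero_locus G x.
Proof.
move=> Gx _ [s [hs ->]]; rewrite rmorph_sum big1_seq // => q /hs /Gx.
by rewrite rmorphM /= => ->; rewrite mulr0.
Qed.

Lemma Ipoly_eval l x :
  (Ipoly l).@[x] = \prod_(j < N) \prod_(t < absz (Num.max (l j) 0)) (x j - t%:R).
Proof.
rewrite /Ipoly rmorph_prod; apply: eq_bigr => j _; rewrite rmorph_prod.
by apply: eq_bigr => t _; rewrite rmorphB /= mevalXU mevalC.
Qed.

Lemma Ipoly_root l x : (Ipoly l).@[x] = 0 ->
  exists j, exists2 t : nat, (t%:Z < l j) & x j = t%:R.
Proof.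
rewrite Ipoly_eval => /eqP /prodf_eq0 [j _ /prodf_eq0 [[t ht] _]].
rewrite subr_eq0 => /eqP xj; exists j, t => //.
by move: (ht); case: (leP (l j) 0) => /= _ t_lt; lia.
Qed.

Lemma Ipoly_root_zero l x j : 0 < l j -> x j = 0 -> (Ipoly l).@[x] = 0.
Proof.
move=> lj xj; rewrite Ipoly_eval (bigD1 j) //=.
have lj_pos : (0 < absz (Num.max (l j) 0))%N by rewrite absz_gt0 gt_eqF // lt_max lj.
by rewrite (bigD1 (Ordinal lj_pos)) //= xj subr0 !mul0r.
Qed.

End Ideals.

Lemma unimodular_coords (R : nzRingType) (n : nat) (B : 'M[int]_n)
    (d : 'rV[R]_n) (w : 'rV[int]_n) :
  B \in unitmx -> d *m map_mx intr B = map_mx intr w ->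
  d = map_mx intr (w *m invmx B).
Proof.
move=> Bunit dB; rewrite map_mxM -dB -mulmxA -map_mxM mulmxV //.
by rewrite map_mx1 mulmx1.
Qed.

Section SmoothCone.
Variables (n m : nat) (rho : 'I_m -> 'I_n -> int).
Hypothesis rho_inj : injective rho.

(** In a smooth cone S, an integral vector v = sum_k c_k rho_k (c supported on
    S) has integral coefficients c_k, all zero when v = 0: the rays of S are
    distinct rows of a unimodular matrix. *)
Lemma smooth_cone_coords (S : {set 'I_m}) (c : 'I_m -> RR) (v : 'I_n -> int) :
  smooth_cone rho S ->
  (forall k, k \notin S -> c k = 0) ->
  (forall t, (v t)%:~R = \sum_(k < m) c k * (rho k t)%:~R) ->
  exists z : 'I_m -> int, (forall k, c k = (z k)%:~R) /\
     ((forall t, v t = 0) -> forall k, z k = 0).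
Proof.
move=> [B [Bunit Brows]] c_off hv.
pose row_of k := [pick j | [forall t, rho k t == B j t]].
have row_ofP k j : row_of k = Some j -> forall t, rho k t = B j t.
  by rewrite /row_of; case: pickP => // j' /forallP h [<-] t; apply/eqP.
have row_of_S k : k \in S -> exists j, row_of k = Some j.
  move=> kS; rewrite /row_of; case: pickP => [j _ | none]; first by exists j.
  have [j hj] := Brows k kS; have /forallPn [t] := negbT (none j).
  by rewrite hj eqxx.
have row_of_inj k k' : k' \in S -> row_of k' = row_of k -> k' = k.
  move=> k'S same; have [j hj] := row_of_S k' k'S.
  apply: rho_inj; apply: functional_extensionality => t.
  by rewrite (row_ofP _ _ hj) (row_ofP k j) // -same.
pose d := \row_j \sum_(k in S | row_of k == Some j) c k.
have d_row k j : k \in S -> row_of k = Some j -> d 0 j = c k.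
  move=> kS hj; rewrite mxE (big_pred1 k) // => k' /=.
  apply/andP/eqP => [[k'S /eqP]|->]; last by rewrite kS hj.
  by rewrite -hj => /(row_of_inj _ _ k'S).
have d_coords : d *m map_mx intr B = map_mx intr (\row_t v t).
  apply/rowP => t; rewrite !mxE hv (bigID (mem S)) /= [X in _ + X]big1; last first.
    by move=> k /c_off ->; rewrite mul0r.
  rewrite addr0.
  transitivity (\sum_j \sum_(k in S | row_of k == Some j) c k * (rho k t)%:~R).
    apply: eq_bigr => j _; rewrite !mxE mulr_suml.
    by apply: eq_bigr => k /andP[_ /eqP /row_ofP ->].
  rewrite (exchange_big_dep (mem S)) /=; last by move=> j k _ /andP[].
  apply: eq_bigr => k kS; have [j hj] := row_of_S k kS.
  by rewrite (big_pred1 j) // => j'; rewrite /= kS hj.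
have d_int := unimodular_coords Bunit d_coords.
pose w := \row_t v t *m invmx B.
exists (fun k => if k \in S then (if row_of k is Some j then w 0 j else 0) else 0).
split.
  move=> k; case: ifP => kS; last by rewrite c_off ?kS.
  by have [j hj] := row_of_S k kS; rewrite hj -(d_row k j) // d_int mxE.
move=> v0 k; case: ifP => // _; case: (row_of k) => // j.
by rewrite !mxE big1 // => t _; rewrite mxE v0 mul0r.
Qed.
End SmoothCone.

Section FanCombinatorics.
Variables (m : nat) (Sigma : {set {set 'I_m}}).

Lemma cone_in_maximal S : S \in Sigma -> exists T, maximal_cone Sigma T /\ S \subset T.
Proof.
move=> SSigma; pose above (T : {set 'I_m}) := (T \in Sigma) && (S \subset T).
have above_S : above S by rewrite /above SSigma subxx.
have [T /andP[TSigma ST] Tmax] := arg_maxnP (fun T : {set 'I_m} => #|T|) above_S.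
exists T; split => //; rewrite /maximal_cone TSigma /=.
apply/forallP => T'; apply/implyP => T'Sigma; apply/implyP => TT'.
have /Tmax : above T' by rewrite /above T'Sigma (subset_trans ST TT').
by rewrite eq_sym eqEcard TT'.
Qed.

Lemma nonface_has_primitive T : T \notin Sigma ->
  exists2 Q : {set 'I_m}, Q \subset T & primitive_collection Sigma Q.
Proof.
move=> TSigma; pose below (Q : {set 'I_m}) := (Q \subset T) && (Q \notin Sigma).
have below_T : below T by rewrite /below subxx TSigma.
have [Q /andP[QT QSigma] Qmin] := arg_minnP (fun Q : {set 'I_m} => #|Q|) below_T.
exists Q => //; split => // Q' Q'Q; apply/negPn/negP => Q'Sigma.
have /Qmin : below Q' by rewrite /below (subset_trans (proper_sub Q'Q) QT) Q'Sigma.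
by rewrite leqNgt proper_card.
Qed.

End FanCombinatorics.

Section Toric.
Variables (n m r : nat) (rho : 'I_m -> 'I_n -> int) (part : 'I_m -> 'I_r).

Lemma nu_ray k : nu rho part (lshift r k) = (rho k, fun i => (part k == i)%:R).
Proof. by rewrite /nu (unsplitK (inl _ k)). Qed.

Lemma nu_zero i : nu rho part (rshift m i) = (fun _ => 0, fun i' => (i == i')%:R).
Proof. by rewrite /nu (unsplitK (inr _ i)). Qed.

Lemma ext_of_ray l k : ext_of part l (lshift r k) = l k.
Proof. by rewrite /ext_of (unsplitK (inl _ k)). Qed.

Lemma ext_of_zero l i : ext_of part l (rshift m i) = - \sum_(k < m | part k == i) l k.
Proof. by rewrite /ext_of (unsplitK (inr _ i)). Qed.

Lemma Lext_ray_relation L : in_Lext rho part L ->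
  forall t, \sum_(k < m) L (lshift r k) * rho k t = 0.
Proof.
move=> [hN _] t; rewrite -[RHS](hN t) big_split_ord /= [X in _ = _ + X]big1 ?addr0.
  by apply: eq_bigr => k _; rewrite nu_ray.
by move=> i _; rewrite nu_zero mulr0.
Qed.

Lemma Lext_zero_coord L : in_Lext rho part L ->
  forall i, L (rshift m i) = - \sum_(k < m | part k == i) L (lshift r k).
Proof.
move=> [_ hZ] i; apply/eqP; rewrite -addr_eq0 -[X in _ == X](hZ i) big_split_ord /=.
rewrite [X in _ == _ + X](bigD1 i) // [X in _ == _ + (_ + X)]big1 => [|i' i'i]; last first.
  by rewrite nu_zero /= (negbTE i'i) mulr0.
rewrite nu_zero /= eqxx mulr1 addr0 addrC big_mkcond /=; apply/eqP; congr (_ + _).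
by apply: eq_bigr => k _; rewrite nu_ray /=; case: eqP; rewrite ?mulr1 ?mulr0.
Qed.

Lemma ext_of_in_Lext l : (forall t, \sum_(k < m) l k * rho k t = 0) ->
  in_Lext rho part (ext_of part l).
Proof.
move=> hl; split => [t|i]; rewrite big_split_ord /=.
  rewrite [X in _ + X]big1 ?addr0 => [|i _]; last by rewrite nu_zero mulr0.
  by rewrite -[RHS](hl t); apply: eq_bigr => k _; rewrite nu_ray ext_of_ray.
rewrite (bigD1 i) // [X in _ + (_ + X)]big1 => [|i' i'i]; last first.
  by rewrite nu_zero /= (negbTE i'i) mulr0.
rewrite nu_zero ext_of_zero /= eqxx mulr1 addr0; apply/eqP.
rewrite subr_eq0; apply/eqP.
rewrite [RHS]big_mkcond; apply: eq_bigr => k _.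
by rewrite nu_ray ext_of_ray /=; case: eqP; rewrite ?mulr1 ?mulr0.
Qed.

End Toric.

Section PrimitiveRelations.
Variables (n m r : nat) (rho : 'I_m -> 'I_n -> int).
Variables (Sigma : {set {set 'I_m}}) (part : 'I_m -> 'I_r).

(** Every set P of rays has a primitive relation: sum_P rho_k lies in the
    relative interior of some cone sigma (completeness), with integral
    coefficients (smoothness). *)
Lemma primitive_relation_exists : smooth_complete_fan rho Sigma ->
  forall P, exists l, primitive_relation rho Sigma P l.
Proof.
move=> [[rho_inj _] faces smooth _ complete] P.
pose v t := \sum_(k in P) rho k t.
have [S SSigma [c [c_ge0 [c_off hv]]]] := complete (fun t => (v t)%:~R).
have [z [cz _]] := smooth_cone_coords rho_inj (smooth S SSigma) c_off hv.
have z_ge0 k : 0 <= z k by rewrite -(ler0z RR) -cz.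
pose sigma := [set k in S | 0 < z k].
have z_off k : k \notin sigma -> z k = 0.
  rewrite inE negb_and; case kS: (k \in S) => /= hk.
    by apply/eqP; rewrite eq_le z_ge0 andbT leNgt.
  by apply/eqP; rewrite -(@intr_eq0 RR) -cz c_off ?kS.
exists (fun k => (k \in P)%:R - (if k \in sigma then z k else 0)), sigma, z; split => //.
- by apply: (faces S) => //; apply/subsetP => k; rewrite inE => /andP[].
- by move=> k; rewrite inE => /andP[].
move=> t; apply: (@intr_inj RR); rewrite -[LHS]/((v t)%:~R) hv rmorph_sum.
rewrite [LHS](bigID (mem sigma)) /= [X in _ + X]big1 ?addr0 => [|k /z_off]; last first.
  by rewrite cz => ->; rewrite mul0r.
by apply: eq_bigr => k _; rewrite cz rmorphM.
Qed.

Variables (P : {set 'I_m}) (l : 'I_m -> int).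
Hypothesis Pl : primitive_relation rho Sigma P l.

Lemma primitive_relation_in_L t : \sum_(k < m) l k * rho k t = 0.
Proof.
have [sigma [c [_ _ hs hl]]] := Pl.
under eq_bigr => k _ do rewrite hl mulrBl.
rewrite sumrB; apply/eqP; rewrite subr_eq0; apply/eqP.
transitivity (\sum_(k in P) rho k t).
  by rewrite [RHS]big_mkcond; apply: eq_bigr => k _; case: (k \in P); rewrite ?mul1r ?mul0r.
by rewrite hs [LHS]big_mkcond; apply: eq_bigr => k _; case: (k \in sigma); rewrite ?mul0r.
Qed.

Lemma primitive_relation_pos k : 0 < l k -> k \in P /\ l k = 1.
Proof.
have [sigma [c [_ c_pos _ ->]]] := Pl.
by have := c_pos k; case: (k \in P); case: (k \in sigma) => /= hc hk; lia.
Qed.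

(** The primitive relation of a primitive collection is nonzero, since P
    itself is not a cone. *)
Lemma primitive_relation_nonzero : primitive_collection Sigma P ->
  ext_of part l <> (fun _ => 0).
Proof.
move=> [PSigma _] l0; have [sigma [c [sigmaSigma c_pos _ hl]]] := Pl.
suff P_sigma : P = sigma by rewrite P_sigma sigmaSigma in PSigma.
apply/setP => k; have := congr1 (fun f => f (lshift r k)) l0.
rewrite /= ext_of_ray hl; have := c_pos k.
by case: (k \in P); case: (k \in sigma) => //= hc; lia.
Qed.

Lemma pair_primitive_relation (u : 'I_n -> RR) (sigma : {set 'I_m}) (c : 'I_m -> int) :
  (forall t, \sum_(k in P) rho k t = \sum_(k in sigma) c k * rho k t) ->
  \sum_(k in P) \sum_(t < n) u t * (rho k t)%:~R =
  \sum_(k in sigma) (c k)%:~R * \sum_(t < n) u t * (rho k t)%:~R.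
Proof.
move=> hs; rewrite exchange_big /=.
under [RHS]eq_bigr => k _ do rewrite mulr_sumr.
rewrite [RHS]exchange_big /=; apply: eq_bigr => t _.
rewrite -mulr_sumr -rmorph_sum hs rmorph_sum mulr_sumr; apply: eq_bigr => k _.
by rewrite rmorphM mulrCA.
Qed.

(** Primitive relations lie in the dual of the nef cone (Mori cone): for a nef
    divisor sum_k a_k D_k with support function given by u on a maximal cone
    containing sigma, sum_k a_k l_k = sum_P (a_k + <u, rho_k>) >= 0. *)
Lemma primitive_relation_dual_Kahler : in_dual_Kahler rho Sigma (ext_of part l).
Proof.
have [sigma [c [sigmaSigma _ hs hl]]] := Pl.
move=> a a_nef; have [T [Tmax sigmaT]] := cone_in_maximal sigmaSigma.
have [u [u_eq u_ge]] := a_nef T Tmax.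
pose U k := \sum_(t < n) u t * (rho k t)%:~R.
have sum_P : \sum_(k < m) a k * ((k \in P)%:R : int)%:~R = \sum_(k in P) a k.
  by rewrite [RHS]big_mkcond; apply: eq_bigr => k _; case: (k \in P); rewrite ?mulr1 ?mulr0.
have sum_sigma : \sum_(k < m) a k * ((if k \in sigma then c k else 0)%:~R : RR)
               = - \sum_(k in P) U k.
  rewrite (pair_primitive_relation u hs) -sumrN [RHS]big_mkcond /=; apply: eq_bigr => k _.
  case: ifP => k_sigma; last by rewrite mulr0.
  by rewrite u_eq ?(subsetP sigmaT) // mulrN opprK mulrC.
under eq_bigr => k _ do rewrite ext_of_ray hl rmorphB /= mulrBr.
rewrite sumrB sum_P sum_sigma opprK -big_split /=; apply: sumr_ge0 => k _.
by have := u_ge k; rewrite -subr_ge0 opprK addrC.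
Qed.

End PrimitiveRelations.

Section DualKahler.
Variables (n m r : nat) (rho : 'I_m -> 'I_n -> int).
Variables (Sigma : {set {set 'I_m}}) (part : 'I_m -> 'I_r).

(** Pairing L in tau^vee with the nef divisor E_i shows that the
    (i,0)-coordinates of elements of L_ext /\ tau^vee are nonpositive. *)
Lemma dual_Kahler_zero_coord_le0 L : nef_partition rho Sigma part ->
  in_Lext rho part L -> in_dual_Kahler rho Sigma L -> forall i, L (rshift m i) <= 0.
Proof.
move=> nef_E L_ext L_dual i; rewrite (Lext_zero_coord L_ext) oppr_le0.
have := L_dual _ (nef_E i); rewrite -(ler0z RR) rmorph_sum /=.
congr (_ <= _); rewrite [RHS]big_mkcond; apply: eq_bigr => k _.
by case: (part k == i); rewrite ?mul1r ?mul0r.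
Qed.

(** Subtracting from an ample divisor the linear function given by its
    support function on a maximal cone S yields a nef divisor vanishing on S
    and positive off S. *)
Lemma ample_normalized (a : 'I_m -> RR) (S : {set 'I_m}) :
  ample_divisor rho Sigma a -> maximal_cone Sigma S ->
  exists a' : 'I_m -> RR, [/\ nef_divisor rho Sigma a',
    forall k, k \in S -> a' k = 0 & forall k, k \notin S -> 0 < a' k].
Proof.
move=> a_ample Smax; have [u [u_eq u_gt]] := a_ample S Smax.
pose U (w : 'I_n -> RR) k := \sum_(t < n) w t * (rho k t)%:~R.
have U_sub w w' k : U (fun t => w' t - w t) k = U w' k - U w k.
  by rewrite /U -sumrB; apply: eq_bigr => t _; rewrite mulrBl.
exists (fun k => a k + U u k); split => [S' S'max | k kS | k kS].
- have [u' [u'_eq u'_gt]] := a_ample S' S'max.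
  exists (fun t => u' t - u t); split => [k kS'|k]; rewrite -/(U _ k) U_sub.
    by rewrite /U u'_eq // opprD.
  rewrite opprD lerD2r; case kS': (k \in S'); first by rewrite /U u'_eq.
  by apply: ltW; apply: u'_gt; rewrite kS'.
- by rewrite /U u_eq // addrN.
- by have := u_gt k kS; rewrite -subr_gt0 opprK addrC.
Qed.

(** An element of L_ext whose ray coordinates vanish off a smooth cone is 0:
    the rays of a smooth cone are linearly independent. *)
Lemma Lext_supported_on_cone L (S : {set 'I_m}) :
  injective rho -> smooth_cone rho S -> in_Lext rho part L ->
  (forall k, k \notin S -> L (lshift r k) = 0) -> L = (fun _ => 0).
Proof.
move=> rho_inj S_smooth L_ext L_off.
have rel t : ((0 : int))%:~R = \sum_(k < m) (L (lshift r k))%:~R * (rho k t)%:~R :> RR.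
  rewrite -(Lext_ray_relation L_ext t) rmorph_sum.
  by apply: eq_bigr => k _; rewrite rmorphM.
have L_off' k : k \notin S -> (L (lshift r k))%:~R = 0 :> RR by move/L_off ->.
have [z [Lz z0]] := smooth_cone_coords rho_inj S_smooth L_off' rel.
have L_ray k : L (lshift r k) = 0 by apply/eqP; rewrite -(@intr_eq0 RR) Lz z0.
apply: functional_extensionality => j; case: (split_ordP j) => [k ->|i ->] //.
by rewrite (Lext_zero_coord L_ext) big1 ?oppr0.
Qed.

(** Pair L with a nef
    divisor a' that vanishes exactly on a maximal cone S containing T. *)
Lemma dual_Kahler_positive_off_cone L T : smooth_projective_fan rho Sigma ->
  L <> (fun _ => 0) -> in_Lext rho part L -> in_dual_Kahler rho Sigma L ->
  T \in Sigma -> exists2 k, k \notin T & 0 < L (lshift r k).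
Proof.
move=> [[[rho_inj _] _ smooth _ _] [a a_ample]] L0 L_ext L_dual TSigma.
have [S [Smax TS]] := cone_in_maximal TSigma.
have [a' [a'_nef a'_S a'_off]] := ample_normalized a_ample Smax.
have [[k /andP[kS Lk]]|/existsPn L_le0] :=
  altP (@existsP _ (fun k => (k \notin S) && (0 < L (lshift r k)))).
  by exists k => //; apply: contra kS; apply: (subsetP TS).
have {}L_le0 k : k \notin S -> L (lshift r k) <= 0.
  by move=> kS; have := L_le0 k; rewrite kS /= -leNgt.
have term_le0 k : a' k * (L (lshift r k))%:~R <= 0.
  case kS: (k \in S); first by rewrite a'_S // mul0r.
  by rewrite pmulr_rle0 ?a'_off ?kS // lerz0 L_le0 ?kS.
have L_off k : k \notin S -> L (lshift r k) = 0.
  move=> kS; apply/eqP; rewrite eq_le L_le0 //= leNgt; apply/negP => Lk_neg.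
  have := L_dual a' a'_nef; rewrite (bigD1 k) //=; apply/negP; rewrite -ltNge.
  rewrite -[X in _ < X](addr0 0); apply: ltr_leD; last exact: sumr_le0.
  by rewrite pmulr_rlt0 ?a'_off // ltrz0.
by case: L0; apply: (Lext_supported_on_cone rho_inj (smooth S (andP Smax).1) L_ext).
Qed.

End DualKahler.

(** A root x of I_{l_ext(P)} has a vanishing coordinate x_{(i,j)} at a ray
    of P: the (i,0)-coordinates of l_ext(P) are <= 0 and its only positive
    ray coordinates are 1's on P. *)
Lemma primitive_generator_root (n m r : nat) (rho : 'I_m -> 'I_n -> int)
    (Sigma : {set {set 'I_m}}) (part : 'I_m -> 'I_r) P l (x : 'I_(m + r) -> CC) :
  nef_partition rho Sigma part -> primitive_relation rho Sigma P l ->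
  (Ipoly (ext_of part l)).@[x] = 0 -> exists2 k, k \in P & x (lshift r k) = 0.
Proof.
move=> nef_E Pl /Ipoly_root [j [t t_lt xj]].
case: (split_ordP j) xj t_lt => [k ->|i ->] xk.
  rewrite ext_of_ray => lk; have [kP lk1] : k \in P /\ l k = 1.
    by apply: (primitive_relation_pos Pl); lia.
  by exists k => //; rewrite xk; have -> : t = 0%N by lia.
have l_ext := ext_of_in_Lext part (primitive_relation_in_L Pl).
have := dual_Kahler_zero_coord_le0 nef_E l_ext (primitive_relation_dual_Kahler part Pl) i.
lia.
Qed.

Unset Implicit Arguments.

Theorem mainTheorem7 (n m r : nat) (rho : 'I_m -> 'I_n -> int)
    (Sigma : {set {set 'I_m}}) (part : 'I_m -> 'I_r) :
  smooth_projective_fan rho Sigma ->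
  nef_partition rho Sigma part ->
  (forall p : {mpoly CC[m + r]},
      in_ideal (Iprime_gens rho Sigma part) p ->
      in_ideal (Ind_gens rho Sigma part) p) /\
  (forall x : 'I_(m + r) -> CC,
      zero_locus (Iprime_gens rho Sigma part) x <->
      zero_locus (Ind_gens rho Sigma part) x).
Proof.
move=> fan nef_E.
have gens_incl g : Iprime_gens rho Sigma part g -> Ind_gens rho Sigma part g.
  case=> [[P [l [P_prim Pl ->]]]|lin]; last by right.
  left; exists (ext_of part l); split => //.
  - exact: primitive_relation_nonzero Pl P_prim.
  - exact: ext_of_in_Lext (primitive_relation_in_L Pl).
  - exact (primitive_relation_dual_Kahler part Pl).
split=> [p|x]; first exact: in_ideal_mono.
split=> [x_Iprime|x_Ind p]; last by move/(in_ideal_mono gens_incl); apply: x_Ind.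
apply: zero_locus_gens => g [[L [L0 L_ext L_dual ->]]|[mu [mu' ->]]]; last first.
  by apply: x_Iprime; apply: in_ideal_gen; right; exists mu, mu'.
pose Z := [set k | x (lshift r k) == 0].
have Z_meets_primitive P : primitive_collection Sigma P -> exists2 k, k \in P & k \in Z.
  move=> P_prim; have [l Pl] := primitive_relation_exists fan.1 P.
  have root : (Ipoly (ext_of part l)).@[x] = 0.
    by apply: x_Iprime; apply: in_ideal_gen; left; exists P, l.
  by have [k kP xk] := primitive_generator_root nef_E Pl root; exists k; rewrite ?inE ?xk.
have coZ_cone : ~: Z \in Sigma.
  apply/negPn/negP => /nonface_has_primitive [Q QcoZ /Z_meets_primitive [k kQ kZ]].
  by have := subsetP QcoZ k kQ; rewrite inE kZ.
have [k kcoZ Lk] := dual_Kahler_positive_off_cone fan L0 L_ext L_dual coZ_cone.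
by apply: Ipoly_root_zero Lk _; move: kcoZ; rewrite inE negbK inE => /eqP.
Qed.
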